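(* Let ${\mathbf{x}}^* \in \mathbb{R}^n$, ${\mathbf{x}}^* \geq 0$, with $\mathcal{J} = \mathrm{supp}({\mathbf{x}}^* )$, and assume there is a vector ${\mathbf{c}}$ with $$\frac{P {\mathbf{e}}_j}{\| P {\mathbf{e}}_j \|_2} \cdot {\mathbf{c}} = 1 \ \ \forall j \in \mathcal{J}, \qquad \frac{P {\mathbf{e}}_i}{\| P {\mathbf{e}}_i \|_2} \cdot {\mathbf{c}} < 1 \ \ \forall i \in \mathcal{J}^c.$$ Let $s \in [\|{\mathbf{x}}^*\|_\infty, \infty]$. If $A$ is injective on the set $\{ {\mathbf{z}} \in \mathbb{R}^n : \mathrm{supp}({\mathbf{z}}) \subseteq \mathcal{J},\ 0 \leq {\mathbf{z}} \leq s \}$, then ${\mathbf{x}}^*$ is the unique solution of $$\min_{0 \leq {\mathbf{x}} \leq s} \| W {\mathbf{x}} \|_1 \quad \text{subject to} \quad A {\mathbf{x}} = A {\mathbf{x}}^*.$$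
   Context: $A \in \mathbb{R}^{m\times n}$ is a matrix, $A^\dagger$ its Moore–Penrose pseudoinverse, and $P = A^\dagger A$ the orthogonal projection onto $\mathcal{N}(A)^\perp$. ${\mathbf{e}}_1,\dots,{\mathbf{e}}_n$ are the standard unit vectors, assumed not to lie in $\mathcal{N}(A)$, so $w_i := \|P{\mathbf{e}}_i\|_2 > 0$; $W = \mathrm{diag}(w_1,\dots,w_n)$. Inequalities between vectors and scalars are componentwise; $s=\infty$ means only the constraint ${\mathbf{x}}\ge 0$. *)

From HB Require Import structures.
From mathcomp Require Import all_boot all_order all_algebra.
From mathcomp Require Import reals.
Set Implicit Arguments. Unset Strict Implicit. Unset Printing Implicit Defensive.
Import Order.TTheory GRing.Theory Num.Theory.
Local Open Scope ring_scope.

(* Moore–Penrose pseudoinverse, characterized by the four Penrose equations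
   (which determine it uniquely). *)
Definition is_MP_pinv (R : realType) (m n : nat)
    (A : 'M[R]_(m, n)) (X : 'M[R]_(n, m)) : Prop :=
  [/\ A *m X *m A = A, X *m A *m X = X,
      (A *m X)^T = A *m X & (X *m A)^T = X *m A].

Definition norm2 (R : realType) (n : nat) (v : 'cV[R]_n) : R :=
  Num.sqrt (\sum_(k < n) v k 0 ^+ 2).

Definition dotv (R : realType) (n : nat) (u v : 'cV[R]_n) : R :=
  \sum_(k < n) u k 0 * v k 0.

Definition unitv (R : realType) (n : nat) (i : 'I_n) : 'cV[R]_n :=
  \col_(k < n) (if k == i then 1 else 0).

Definition wt (R : realType) (n : nat) (P : 'M[R]_n) (i : 'I_n) : R :=
  norm2 (P *m unitv R i).

Definition supp (R : realType) (n : nat) (x : 'cV[R]_n) : {set 'I_n} :=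
  [set i | x i 0 != 0].

(* Box constraint 0 <= x <= s; s = None encodes s = +infinity
   (only the constraint x >= 0). *)
Definition in_box (R : realType) (n : nat) (s : option R) (x : 'cV[R]_n) : Prop :=
  forall i : 'I_n, 0 <= x i 0 /\ (if s is Some t then x i 0 <= t else True).

Definition wl1 (R : realType) (n : nat) (P : 'M[R]_n) (x : 'cV[R]_n) : R :=
  \sum_(i < n) `| wt P i * x i 0 |.

From HB Require Import structures.
From mathcomp Require Import all_boot all_order all_algebra.
From mathcomp Require Import reals.
Set Implicit Arguments. Unset Strict Implicit. Unset Printing Implicit Defensive.
Import Order.TTheory GRing.Theory Num.Theory.
Local Open Scope ring_scope.

(* Dual certificate: with q_i := (P e_i) . c the hypotheses say q_i = w_i on J
   and q_i < w_i off J.  For x >= 0 the linear form sum_i q_i x_i equals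
   (P x) . c, which depends only on A x since P = A^+ A; hence
   ||W x||_1 = sum_i w_i x_i >= sum_i q_i x_i = sum_i q_i x*_i = ||W x*||_1,
   with equality only if x vanishes off J.
   Injectivity of A on the nonnegative vectors supported in J and bounded
   by s then forces x = x*. *)

Section DualCertificate.
Variables (R : realDomainType) (I : finType).

Lemma leif_sum_certificate (w q : I -> R) (J : {set I}) :
    {in J, q =1 w} -> (forall i, i \notin J -> q i < w i) ->
  forall x, (forall i, 0 <= x i) ->
  \sum_i q i * x i <= \sum_i w i * x i ?= iff [forall i, (i \in J) || (x i == 0)].
Proof.
move=> qJ qJc x x_ge0; apply: leif_sum => i _.
have [iJ | iJ] := boolP (i \in J); first by rewrite qJ //; exact: leif_refl.
split; first by rewrite ler_wpM2r // ltW // qJc.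
by rewrite -subr_eq0 -mulrBl mulf_eq0 subr_eq0 (lt_eqF (qJc i iJ)).
Qed.

End DualCertificate.

Section WeightedL1.
Variables (R : realType) (n : nat).
Implicit Types (P : 'M[R]_n) (x c : 'cV[R]_n).

Lemma norm2_gt0 (v : 'cV[R]_n) : v != 0 -> 0 < norm2 v.
Proof.
move=> v_neq0; rewrite /norm2 sqrtr_gt0.
have [k vk_neq0] : exists k, v k 0 != 0.
  apply/existsP; apply: contraR v_neq0; rewrite negb_exists => /forallP v0.
  by apply/eqP/matrixP => i j; rewrite (ord1 j) mxE; exact/eqP/negPn/v0.
rewrite (bigD1 k) //= ltr_pwDl ?sumr_ge0 // => [|i _]; last exact: sqr_ge0.
by rewrite lt_def sqrf_eq0 vk_neq0 sqr_ge0.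
Qed.

Lemma wt_ge0 P i : 0 <= wt P i.
Proof. exact: sqrtr_ge0. Qed.

Lemma mulmx_unitv P i k : (P *m unitv R i) k 0 = P k i.
Proof.
rewrite mxE (bigD1 i) //= big1 ?addr0 => [|l /negbTE li]; rewrite mxE ?eqxx.
  by rewrite mulr1.
by rewrite li mulr0.
Qed.

Lemma dotvZl a (u v : 'cV[R]_n) : dotv (a *: u) v = a * dotv u v.
Proof. by rewrite /dotv big_distrr; apply: eq_bigr => k _; rewrite mxE -mulrA. Qed.

Lemma dotv_mulmx_sum P x c :
  dotv (P *m x) c = \sum_i dotv (P *m unitv R i) c * x i 0.
Proof.
rewrite /dotv; under [RHS]eq_bigr => i _ do rewrite big_distrl /=.
rewrite exchange_big /=; apply: eq_bigr => k _.
rewrite mxE big_distrl /=; apply: eq_bigr => i _.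
by rewrite mulmx_unitv mulrAC.
Qed.

Lemma wl1_nonneg P x :
  (forall i, 0 <= x i 0) -> wl1 P x = \sum_i wt P i * x i 0.
Proof.
by move=> x_ge0; apply: eq_bigr => i _; rewrite ger0_norm ?mulr_ge0 ?wt_ge0.
Qed.

End WeightedL1.

Section PseudoInverse.
Variables (R : realType) (m n : nat) (A : 'M[R]_(m, n)) (X : 'M[R]_(n, m)).
Hypothesis AXA : A *m X *m A = A.

Lemma wt_pinv_gt0 i : A *m unitv R i != 0 -> 0 < wt (X *m A) i.
Proof.
move=> Aei_neq0; apply: norm2_gt0; apply: contraNneq Aei_neq0 => Pei0.
by rewrite -AXA -!mulmxA [X *m _]mulmxA Pei0 mulmx0.
Qed.

End PseudoInverse.

Theorem corollary1 (R : realType) (m n : nat)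
    (A : 'M[R]_(m, n)) (Adag : 'M[R]_(n, m))
    (xs c : 'cV[R]_n) (s : option R) :
  is_MP_pinv A Adag ->
  (forall i : 'I_n, A *m unitv R i != 0) ->
  (forall i : 'I_n, 0 <= xs i 0) ->
  (forall j : 'I_n, j \in supp xs ->
     dotv ((wt (Adag *m A) j)^-1 *: ((Adag *m A) *m unitv R j)) c = 1) ->
  (forall i : 'I_n, i \notin supp xs ->
     dotv ((wt (Adag *m A) i)^-1 *: ((Adag *m A) *m unitv R i)) c < 1) ->
  (forall t : R, s = Some t -> forall i : 'I_n, `| xs i 0 | <= t) ->
  (forall z1 z2 : 'cV[R]_n,
     supp z1 \subset supp xs -> in_box s z1 ->
     supp z2 \subset supp xs -> in_box s z2 ->
     A *m z1 = A *m z2 -> z1 = z2) ->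
  in_box s xs /\
  (forall x : 'cV[R]_n, in_box s x -> A *m x = A *m xs -> x != xs ->
     wl1 (Adag *m A) xs < wl1 (Adag *m A) x).
Proof.
move=> [AXA _ _ _] Aei_neq0 xs_ge0 certJ certJc s_ge A_inj.
set P := Adag *m A; set q := fun i => dotv (P *m unitv R i) c.
have w_gt0 i : 0 < wt P i by exact: wt_pinv_gt0.
have qJ : {in supp xs, q =1 wt P}.
  move=> j /certJ; rewrite dotvZl => /(congr1 ( *%R (wt P j))).
  by rewrite mulVKf ?lt0r_neq0 ?mulr1.
have qJc i : i \notin supp xs -> q i < wt P i.
  by move/certJc; rewrite dotvZl ltr_pdivrMl // mulr1.
have xs_box : in_box s xs.
  move=> i; split=> //; case: s s_ge A_inj => // t /(_ t erefl i) xs_le _.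
  exact: le_trans (ler_norm _) xs_le.
split=> // x x_box Ax_eq x_neq.
have x_ge0 i : 0 <= x i 0 by case: (x_box i).
have gap := leif_sum_certificate qJ qJc.
have wl1_xs : wl1 P xs = dotv (P *m x) c.
  rewrite wl1_nonneg // /P -!mulmxA Ax_eq !mulmxA -/P dotv_mulmx_sum.
  apply/esym/eqP; rewrite (gap _ xs_ge0); apply/forallP => i.
  by rewrite inE orNb.
rewrite lt_neqAle wl1_xs dotv_mulmx_sum wl1_nonneg // (gap _ x_ge0).
apply/andP; split; last exact: gap _ x_ge0.
move: x_neq; apply: contra => /forallP x0_off; apply/eqP/A_inj => //.
by apply/subsetP => i; rewrite inE; case/orP: (x0_off i) => // /eqP ->; rewrite eqxx.
Qed.
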